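(* For every positive integer $n$, $$\sum_{T\in\mathsf{T}_n} t^{\operatorname{leg}(T)}=\sum_{\mathbf a\in\mathsf{PF}_n} t^{z(\mathbf a)}$$ as polynomials in $t$.
   Context: Let $[n]=\{1,\dots,n\}$. $\mathsf{T}_n$ is the set of labeled trees on the vertex set $\{0,1,\dots,n\}$, rooted at $0$. For $T\in\mathsf{T}_n$, run the depth-first search algorithm on $T$ starting at the root $0$, where at each vertex the algorithm moves to the unvisited neighbor of highest label. Let $\mathbf v(T)=(v_1,\dots,v_k)$ be the ordered list of vertices other than the root that are visited before the algorithm backtracks for the first time (if $T$ is a path with endpoint $0$, this is all non-root vertices), and let $\operatorname{leg}(T)=k$. $\mathsf{PF}_n$ is the set of parking functions of length $n$: tuples $\mathbf a=(a_1,\dots,a_n)$ of positive integers such that, for every $i\in[n]$, the $i$th smallest entry is at most $i$ (equivalently $|\{j: a_j\le i\}|\ge i$ for all $i\in[n]$). For $\mathbf a\in[n]^n$, the center $Z(\mathbf a)$ is the largest subset $X=\{x_1<\dots<x_\ell\}\subseteq[n]$ such that $a_{x_i}\le i$ for every $i\in[\ell]$, and $z(\mathbf a)=|Z(\mathbf a)|$. *)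

From mathcomp Require Import all_boot all_order all_algebra.
Set Implicit Arguments. Unset Strict Implicit. Unset Printing Implicit Defensive.

(* Simple graphs on the vertex set {0,...,n} = 'I_n.+1, given by their edge
   set: a set of 2-element subsets of vertices. *)
Definition graph (n : nat) := {set {set 'I_n.+1}}.

Definition adj (n : nat) (E : graph n) : rel 'I_n.+1 :=
  fun x y => [set x; y] \in E.

Definition is_tree (n : nat) (E : graph n) : bool :=
  [forall e in E, #|e| == 2]
  && [forall v : 'I_n.+1, connect (adj E) ord0 v]
  && (#|E| == n).

Definition trees (n : nat) : {set graph n} := [set E | is_tree E].

(* Depth-first search from the current vertex [cur], with [visited] the list
   of already visited vertices: move to the unvisited neighbour of highest
   label; stop (count nothing more) at the first vertex with no unvisited
   neighbour, i.e. at the first backtrack.  Since [enum 'I_n.+1] lists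
   vertices in increasing order, the [last] element of the filtered list is the
   unvisited neighbour of highest label. *)
Fixpoint dfs_first_branch (n : nat) (E : graph n) (fuel : nat)
    (cur : 'I_n.+1) (visited : seq 'I_n.+1) : nat :=
  match fuel with
  | 0 => 0
  | fuel'.+1 =>
      let cands := [seq y <- enum 'I_n.+1 | adj E cur y && (y \notin visited)] in
      if cands is c :: cs then
        let m := last c cs in
        (dfs_first_branch E fuel' m (m :: visited)).+1
      else 0
  end.

(* leg(T) = number of non-root vertices visited before the first backtrack
   (n+1 steps of fuel are more than enough: at most n non-root vertices). *)
Definition leg (n : nat) (E : graph n) : nat :=
  dfs_first_branch E n.+1 ord0 [:: ord0].

(* Tuples a = (a_1,...,a_n) with positions 1..n encoded as 'I_n (position
   j+1 <-> j) and values in {0,...,n} ('I_n.+1). *)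
Definition parking_functions (n : nat) : {set {ffun 'I_n -> 'I_n.+1}} :=
  [set a : {ffun 'I_n -> 'I_n.+1} | [forall j, 0 < (a j : nat)]
           && [forall i : 'I_n.+1, (0 < (i : nat)) ==>
                 ((i : nat) <= #|[set j | (a j : nat) <= i]|)]].

(* X = {x_1 < ... < x_l} satisfies a_{x_i} <= i for all i; the (1-based)
   rank i of x in X is #|{y in X | y <= x}|. *)
Definition center_ok (n : nat) (a : {ffun 'I_n -> 'I_n.+1}) (X : {set 'I_n}) : bool :=
  [forall x in X, (a x : nat) <= #|[set y in X | y <= x]|].

Definition zcenter (n : nat) (a : {ffun 'I_n -> 'I_n.+1}) : nat :=
  \max_(X : {set 'I_n} | center_ok a X) #|X|.

From mathcomp Require Import all_boot all_order all_algebra zify.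
Set Implicit Arguments. Unset Strict Implicit. Unset Printing Implicit Defensive.

(* Both sides equal the distribution of K(a), the largest k such that the values
   1, ..., k all occur in the parking function a.

   Take as children of the l-th visited vertex the vertices j+1 with
   a_j = l+1, and run the depth-first search on these lists: as a is a parking
   function the search reaches all n+1 vertices, and joining each j+1 to the
   a_j-th visited vertex gives a tree whose depth-first order is the one just
   computed. Reading the parent positions off the depth-first order of a tree
   inverts this, so a |-> T(a) is a bijection. Along its first branch the
   search moves from the i-th to the (i+1)-th visited vertex exactly while the
   former has a child, i.e. while the value i+1 occurs in a: leg(T(a)) = K(a).

   The largest centre of c is found greedily from left to right. The
   recoding of a below yields a parking function whose greedy centre is the set
   of last occurrences of the values 1, ..., K(a), of size K(a); the recoding is
   injective, since the last occurrences are recovered from right to left from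
   their inversion counts, so it permutes PF_n. *)

(* [lift ord0 j] is the vertex [j+1]; its parent sits at position [q j] of [X]. *)
Definition parent_graph n (X : seq 'I_n.+1) (q : 'I_n -> nat) : graph n :=
  [set [set lift ord0 j; nth ord0 X (q j)] | j : 'I_n].

Definition children n (q : 'I_n -> nat) (l : nat) : {set 'I_n.+1} :=
  [set v | if unlift ord0 v is Some j then q j == l else false].

Definition child_nbrs n (q : 'I_n -> nat) : seq 'I_n.+1 -> nat -> {set 'I_n.+1} :=
  fun _ l => children q l.

Definition tree_nbrs n (E : graph n) : seq 'I_n.+1 -> nat -> {set 'I_n.+1} :=
  fun X l => [set y | adj E (nth ord0 X l) y].

Lemma set2_eq (T : finType) (x y u w : T) :
  [set x; y] = [set u; w] -> (x = u /\ y = w) \/ (x = w /\ y = u).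
Proof.
move=> E.
have /set2P x_uw : x \in [set u; w] by rewrite -E set21.
have /set2P y_uw : y \in [set u; w] by rewrite -E set22.
have /set2P u_xy : u \in [set x; y] by rewrite E set21.
have /set2P w_xy : w \in [set x; y] by rewrite E set22.
by case: x_uw y_uw u_xy w_xy => -> [] -> [] ? [] ?; subst; auto.
Qed.

Lemma lift0_neq0 n (j : 'I_n) : lift ord0 j != ord0.
Proof. by apply/eqP => /(congr1 val). Qed.

Lemma mem_children_lift n (q : 'I_n -> nat) l j : (lift ord0 j \in children q l) = (q j == l).
Proof. by rewrite inE liftK. Qed.

Lemma childrenP n (q : 'I_n -> nat) l v :
  v \in children q l -> exists2 j, v = lift ord0 j & q j = l.
Proof. by rewrite inE; case: unliftP => [j ->|//] /eqP; exists j. Qed.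

Lemma eq_children n (q1 q2 : 'I_n -> nat) l : q1 =1 q2 -> children q1 l = children q2 l.
Proof. by move=> eq_q; apply/setP => v; rewrite !inE; case: unliftP => // j _; rewrite eq_q. Qed.

Section Enumeration.
Variable n : nat.
Local Notation V := 'I_n.+1.
Variable X : seq V.
Hypothesis X_uniq : uniq X.
Hypothesis size_X : size X = n.+1.

Lemma mem_order v : v \in X.
Proof.
have sub : {subset X <= enum V} by move=> u _; rewrite mem_enum.
have le_size : size (enum V) <= size X by rewrite size_enum_ord size_X.
by have [_ ->] := uniq_min_size X_uniq sub le_size; rewrite mem_enum.
Qed.

Lemma index_order_lt v : index v X < n.+1.
Proof. by rewrite -[X in _ < X]size_X index_mem mem_order. Qed.

Lemma nth_index_order v : nth ord0 X (index v X) = v.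
Proof. by rewrite nth_index ?mem_order. Qed.

Lemma index_nth_order i : i < n.+1 -> index (nth ord0 X i) X = i.
Proof. by move=> lt_i; rewrite index_uniq ?size_X. Qed.

Lemma nth_order_inj i i' : i < n.+1 -> i' < n.+1 -> nth ord0 X i = nth ord0 X i' -> i = i'.
Proof. by move=> lt_i lt_i' eq_nth; rewrite -(index_nth_order lt_i) eq_nth index_nth_order. Qed.

Lemma mem_take_order s y : (y \in take s X) = (index y X < s).
Proof.
apply/idP/idP => [|lt_ys].
  case/(nthP ord0) => i; rewrite size_take size_X => lt_i <-.
  have [lt_is lt_in] : i < s /\ i < n.+1 by move: lt_i; case: ifP; lia.
  by rewrite nth_take // index_nth_order.
rewrite -(nth_index_order y) -(nth_take _ lt_ys); apply: mem_nth.
by rewrite size_take size_X; have := index_order_lt y; case: ifP; lia.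
Qed.

Section ParentGraph.
Variable q : 'I_n -> nat.
Hypothesis X_root : nth ord0 X 0 = ord0.
Hypothesis parent_before : forall j, q j < index (lift ord0 j) X.

Local Notation E := (parent_graph X q).

Lemma parent_lt j : q j < n.+1.
Proof. by have := parent_before j; have := index_order_lt (lift ord0 j); lia. Qed.

Lemma adj_parent_graph x y :
  adj E x y = [exists j, [set x; y] == [set lift ord0 j; nth ord0 X (q j)]].
Proof.
by apply/imsetP/existsP => [[j _ /eqP]|[j /eqP]]; exists j.
Qed.

(* On an initial segment of [X], the unvisited neighbours of the [l]-th vertex
   are exactly its children: its parent comes earlier in [X]. *)
Lemma adj_parent_graph_take s l y : l < s -> s <= n.+1 ->
  adj E (nth ord0 X l) y && (y \notin take s X) =
  (y \in children q l) && (y \notin take s X).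
Proof.
move=> lt_ls le_s; rewrite adj_parent_graph.
apply/andP/andP => [[/existsP [j /eqP eq_e] y_new]|[/childrenP [j -> <-] y_new]]; last first.
  by split=> //; apply/existsP; exists j; rewrite setUC.
split=> //; case: (set2_eq eq_e) => [[eq_l eq_y]|[eq_l eq_y]].
  move: y_new; rewrite mem_take_order eq_y index_nth_order ?parent_lt //.
  by have := parent_before j; rewrite -eq_l index_nth_order; lia.
by rewrite eq_y mem_children_lift (nth_order_inj (leq_trans lt_ls le_s) (parent_lt j) eq_l).
Qed.

Lemma parent_graph_connected i : i < n.+1 -> connect (adj E) ord0 (nth ord0 X i).
Proof.
elim: i {-2}i (leqnn i) => [|m IH] i le_im lt_i.
  by move: le_im; rewrite leqn0 => /eqP ->; rewrite X_root connect0.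
case: (unliftP ord0 (nth ord0 X i)) => [j eq_v|->]; last exact: connect0.
apply: (connect_trans (y := nth ord0 X (q j))).
  by apply: IH (parent_lt j); have := parent_before j; rewrite -eq_v index_nth_order //; lia.
by apply: connect1; rewrite adj_parent_graph; apply/existsP; exists j; rewrite eq_v setUC.
Qed.

Lemma parent_graph_tree : E \in trees n.
Proof.
rewrite inE /is_tree -andbA; apply/and3P; split.
- apply/forall_inP => e /imsetP [j _ ->].
  rewrite cards2; suff -> : lift ord0 j != nth ord0 X (q j) by [].
  apply/eqP => eq_v; have := parent_before j.
  by rewrite eq_v index_nth_order ?parent_lt //; lia.
- apply/forallP => v; rewrite -(nth_index_order v).
  exact: parent_graph_connected (index_order_lt v).
- apply/eqP; rewrite card_imset ?card_ord // => j j'.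
  case/set2_eq => [[/lift_inj //]|[eq_l eq_r]].
  have := parent_before j; have := parent_before j'.
  by rewrite eq_l -eq_r !index_nth_order ?parent_lt //; lia.
Qed.

End ParentGraph.

Lemma parent_graph_inj (q1 q2 : 'I_n -> nat) :
  (forall j, q1 j < index (lift ord0 j) X) -> (forall j, q2 j < index (lift ord0 j) X) ->
  parent_graph X q1 = parent_graph X q2 -> q1 =1 q2.
Proof.
move=> before1 before2 eq_E j.
have : [set lift ord0 j; nth ord0 X (q1 j)] \in parent_graph X q2.
  by rewrite -eq_E; apply: imset_f.
have lt1 := parent_lt before1; have lt2 := parent_lt before2.
case/imsetP => j' _ /set2_eq [[/lift_inj <- eq_r]|[eq_l eq_r]].
  exact: (nth_order_inj (lt1 j) (lt2 j) eq_r).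
have := before1 j; have := before2 j'.
by rewrite eq_l -eq_r !index_nth_order ?lt1 ?lt2; lia.
Qed.

End Enumeration.

Section DepthFirstSearch.
Variable n : nat.
Local Notation V := 'I_n.+1.

(* [nbrs X l] is the set of successors of the [l]-th vertex of the visit list [X]. *)
Variable nbrs : seq V -> nat -> {set V}.

Definition has_fresh (X : seq V) (l : nat) : bool :=
  [exists v, (v \in nbrs X l) && (v \notin X)].

Fixpoint last_fresh (X : seq V) (l : nat) : option nat :=
  if l is l'.+1 then (if has_fresh X l' then Some l' else last_fresh X l') else None.

Definition fresh (X : seq V) (l : nat) : seq V :=
  [seq y <- enum V | (y \in nbrs X l) && (y \notin X)].

(* Backtrack to the latest visited vertex that still has an unvisited
   successor, and move to its unvisited successor of highest label. *)
Definition dfs_next (X : seq V) : option V :=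
  if last_fresh X (size X) is Some l then Some (last ord0 (fresh X l)) else None.

Fixpoint dfs (k : nat) : seq V :=
  if k is k'.+1 then
    (let X := dfs k' in if dfs_next X is Some v then rcons X v else X)
  else [:: ord0].

Lemma last_fresh_some X l m :
  last_fresh X l = Some m -> m < l /\ has_fresh X m.
Proof.
elim: l => [|l IH] //=; case: ifP => [fresh_l [<-]|_ /IH [lt_ml fresh_m]]; split=> //; lia.
Qed.

Lemma last_fresh_not_none X l m : m < l -> has_fresh X m -> last_fresh X l <> None.
Proof.
elim: l => [|l IH] //= lt_ml fresh_m; case: ifP => // no_fresh.
move: lt_ml; rewrite ltnS leq_eqVlt => /orP [/eqP eq_ml|lt_ml]; last exact: IH.
by move: no_fresh; rewrite -eq_ml fresh_m.
Qed.

Lemma mem_fresh X l y : (y \in fresh X l) = (y \in nbrs X l) && (y \notin X).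
Proof. by rewrite mem_filter mem_enum andbT. Qed.

Lemma dfs_nextP X v : dfs_next X = Some v ->
  exists m, [/\ last_fresh X (size X) = Some m, m < size X,
    v = last ord0 (fresh X m), v \in nbrs X m & v \notin X].
Proof.
rewrite /dfs_next; case E: last_fresh => [m|] // [<-].
have [lt_m /existsP [w w_fresh]] := last_fresh_some E.
have : last ord0 (fresh X m) \in fresh X m.
  have : w \in fresh X m by rewrite mem_fresh.
  by case: (fresh X m) => [|c cs] //= _; apply: mem_last.
by rewrite mem_fresh => /andP [? ?]; exists m.
Qed.

Lemma dfs_prefix k k' : k <= k' -> exists t, dfs k' = dfs k ++ t.
Proof.
elim: k' => [|k' IH]; first by rewrite leqn0 => /eqP ->; exists [::]; rewrite cats0.
rewrite leq_eqVlt => /orP [/eqP ->|]; first by exists [::]; rewrite cats0.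
rewrite ltnS => /IH [t ht] /=; case: dfs_next => [v|]; last by exists t.
by exists (rcons t v); rewrite ht rcons_cat.
Qed.

Lemma dfs_uniq k : uniq (dfs k).
Proof.
elim: k => [|k IH] //=; case E: dfs_next => [v|] //.
have [m [_ _ _ _ v_new]] := dfs_nextP E.
by rewrite rcons_uniq v_new IH.
Qed.

Lemma size_dfs_le k k' : k <= k' -> size (dfs k') <= size (dfs k) + (k' - k).
Proof.
elim: k' => [|k' IH]; first by rewrite leqn0 => /eqP ->; rewrite subnn addn0.
rewrite leq_eqVlt => /orP [/eqP ->|]; first lia.
rewrite ltnS => le_kk'; have := IH le_kk'.
by rewrite /=; case: dfs_next => [v|]; rewrite ?size_rcons; lia.
Qed.

Lemma size_dfs_leS k : size (dfs k) <= k.+1.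
Proof. by elim: k => [|k IH] //=; case: dfs_next => [v|]; rewrite ?size_rcons; lia. Qed.

Lemma nth_dfs0 k : nth ord0 (dfs k) 0 = ord0.
Proof. by have [t ->] := dfs_prefix (leq0n k). Qed.

Lemma nth_dfs k k' i : k <= k' -> i < size (dfs k) ->
  nth ord0 (dfs k') i = nth ord0 (dfs k) i.
Proof. by move=> /dfs_prefix [t ->] lt_i; rewrite nth_cat lt_i. Qed.

Lemma dfs_full N :
  (forall k, k < N -> size (dfs k) = k.+1 -> exists2 m, m < k.+1 & has_fresh (dfs k) m) ->
  size (dfs N) = N.+1.
Proof.
move=> progress; suff: forall k, k <= N -> size (dfs k) = k.+1 by apply.
elim=> [|k IH] // lt_kN.
have size_k : size (dfs k) = k.+1 by apply: IH; apply: ltnW.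
have [m lt_m fresh_m] := progress k lt_kN size_k.
rewrite /= /dfs_next size_k.
case E: last_fresh => [l|]; first by rewrite size_rcons size_k.
by case: (last_fresh_not_none lt_m fresh_m).
Qed.

Lemma dfs_succ k : size (dfs k.+1) = k.+2 -> size (dfs k) = k.+1 ->
  exists m, [/\ last_fresh (dfs k) k.+1 = Some m, m < k.+1,
    nth ord0 (dfs k.+1) k.+1 = last ord0 (fresh (dfs k) m),
    nth ord0 (dfs k.+1) k.+1 \in nbrs (dfs k) m
    & nth ord0 (dfs k.+1) k.+1 \notin dfs k].
Proof.
move=> size_k1 size_k; move: size_k1 => /=.
case E: dfs_next => [v|]; last by rewrite size_k; lia.
move=> _; have [m [last_m lt_m -> ? ?]] := dfs_nextP E.
by exists m; rewrite nth_rcons size_k ltnn eqxx; rewrite size_k in last_m lt_m.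
Qed.

Section FullSearch.
Hypothesis size_dfs_n : size (dfs n) = n.+1.

Lemma size_dfs i : i <= n -> size (dfs i) = i.+1.
Proof. by move=> le_in; have := size_dfs_le le_in; have := size_dfs_leS i; lia. Qed.

Lemma dfs_take i : i <= n -> dfs i = take i.+1 (dfs n).
Proof.
move=> le_in; have [t ->] := dfs_prefix le_in.
by rewrite -(size_dfs le_in) take_size_cat.
Qed.

Lemma dfs_discovered v : v != ord0 ->
  let p := index v (dfs n) in
  exists m, [/\ last_fresh (dfs p.-1) p = Some m, m < p & v \in nbrs (dfs p.-1) m].
Proof.
move=> v_neq0 p; have X_uniq := dfs_uniq n.
have v_at_p : nth ord0 (dfs n) p = v by apply: nth_index_order.
have [i eq_p] : exists i, p = i.+1.
  exists p.-1; rewrite prednK // lt0n; apply: contra v_neq0 => /eqP p0.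
  by rewrite -v_at_p p0 nth_dfs0.
have lt_in : i < n by rewrite -ltnS -eq_p index_order_lt.
have [m [? ? _ m_nbr _]] := dfs_succ (size_dfs lt_in) (size_dfs (ltnW lt_in)).
exists m; rewrite eq_p; split=> //.
by rewrite -v_at_p eq_p (@nth_dfs i.+1 n i.+1) ?size_dfs.
Qed.

End FullSearch.

End DepthFirstSearch.

Lemma eq_dfs n (nbrs1 nbrs2 : seq 'I_n.+1 -> nat -> {set 'I_n.+1}) N :
  (forall k, k < N -> forall l, l < size (dfs nbrs1 k) -> forall y,
     (y \in nbrs1 (dfs nbrs1 k) l) && (y \notin dfs nbrs1 k) =
     (y \in nbrs2 (dfs nbrs1 k) l) && (y \notin dfs nbrs1 k)) ->
  dfs nbrs1 N = dfs nbrs2 N.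
Proof.
move=> same_fresh; suff: forall k, k <= N -> dfs nbrs1 k = dfs nbrs2 k by apply.
elim=> [|k IH] // lt_kN /=; rewrite -IH ?(ltnW lt_kN) //.
set X := dfs nbrs1 k.
have same_last : forall l, l <= size X -> last_fresh nbrs1 X l = last_fresh nbrs2 X l.
  elim=> [|l IHl] //= lt_l.
  have -> : has_fresh nbrs1 X l = has_fresh nbrs2 X l.
    by apply: eq_existsb => y; apply: same_fresh.
  by rewrite IHl ?(ltnW lt_l).
rewrite /dfs_next same_last //; case E: last_fresh => [m|] //.
have [lt_m _] := last_fresh_some E.
by rewrite /fresh (eq_filter (same_fresh k lt_kN m lt_m)).
Qed.

Lemma eq_dfs_full n (nbrs1 nbrs2 : seq 'I_n.+1 -> nat -> {set 'I_n.+1}) :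
  size (dfs nbrs1 n) = n.+1 ->
  (forall s l y, l < s -> s <= n.+1 ->
     let P := take s (dfs nbrs1 n) in
     (y \in nbrs1 P l) && (y \notin P) = (y \in nbrs2 P l) && (y \notin P)) ->
  dfs nbrs1 n = dfs nbrs2 n.
Proof.
move=> full same_fresh; apply: eq_dfs => k lt_kn l.
rewrite (dfs_take full (ltnW lt_kn)) size_takel => [lt_l y|]; last by rewrite full ltnW.
exact: (same_fresh _ _ _ lt_l (ltnW lt_kn)).
Qed.

Section ChildSearch.
Variable n : nat.
Local Notation V := 'I_n.+1.
Variable q : 'I_n -> nat.
Local Notation X := (dfs (child_nbrs q) n).
Local Notation E := (parent_graph X q).
Hypothesis full : size X = n.+1.

Let X_uniq : uniq X := dfs_uniq _ n.

Lemma dfs_children_parent_before j : q j < index (lift ord0 j) X.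
Proof.
have [m [_ lt_m]] := dfs_discovered full (lift0_neq0 j).
by rewrite /child_nbrs mem_children_lift => /eqP ->.
Qed.

Lemma dfs_children_tree : X = dfs (tree_nbrs E) n.
Proof.
apply: eq_dfs_full full _ => s l y lt_ls le_s /=.
rewrite /tree_nbrs [in RHS]inE nth_take //.
by rewrite (adj_parent_graph_take X_uniq full dfs_children_parent_before).
Qed.

Section FirstBranch.
Variable k : nat.
Hypothesis children_below : forall l, l < k -> exists j, q j = l.
Hypothesis no_child_k : forall j, q j != k.

Local Notation branch_cands i :=
  [seq y <- enum V | (y \in children q i) && (y \notin take i.+1 X)].

Lemma k_le_n : k <= n.
Proof.
case: k children_below => // k' below; have [j qj] := below k' (ltnSn _).
by have := dfs_children_parent_before j; have := index_order_lt X_uniq full (lift ord0 j); lia.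
Qed.

Lemma first_branch_cands i : i <= n ->
  [seq y <- enum V | adj E (nth ord0 X i) y && (y \notin rev (take i.+1 X))] = branch_cands i.
Proof.
move=> le_in; apply: eq_filter => y; rewrite mem_rev.
by rewrite (adj_parent_graph_take X_uniq full dfs_children_parent_before).
Qed.

Lemma branch_cands_end : branch_cands k = [::].
Proof.
apply/eqP; rewrite -[_ == _]negbK -has_filter; apply/hasPn => y _.
by apply/negP => /andP [/childrenP [j _ qj] _]; move: (no_child_k j); rewrite qj eqxx.
Qed.

Lemma branch_cands_next i : i < k ->
  nth ord0 X i.+1 \in branch_cands i /\ last ord0 (branch_cands i) = nth ord0 X i.+1.
Proof.
move=> lt_ik; have lt_in := leq_trans lt_ik k_le_n.
have [m [last_m _ eq_v v_nbr v_new]] :=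
  dfs_succ (size_dfs full lt_in) (size_dfs full (ltnW lt_in)).
have X_prefix : dfs (child_nbrs q) i = take i.+1 X := dfs_take full (ltnW lt_in).
have fresh_i : has_fresh (child_nbrs q) (dfs (child_nbrs q) i) i.
  have [j qj] := children_below lt_ik; apply/existsP; exists (lift ord0 j).
  rewrite /child_nbrs mem_children_lift qj eqxx X_prefix mem_take_order //.
  by have := dfs_children_parent_before j; rewrite qj -ltnNge.
have eq_m : i = m by move: last_m; rewrite /= fresh_i => -[].
subst m.
have X_next : nth ord0 (dfs (child_nbrs q) i.+1) i.+1 = nth ord0 X i.+1.
  by rewrite (@nth_dfs _ _ i.+1 n) // (size_dfs full lt_in).
rewrite X_next in eq_v v_nbr v_new.
split; last by rewrite eq_v /fresh X_prefix.
by rewrite mem_filter mem_enum andbT v_nbr -X_prefix v_new.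
Qed.

Lemma dfs_first_branch_from d i fuel : i + d = k -> d <= fuel ->
  dfs_first_branch E fuel (nth ord0 X i) (rev (take i.+1 X)) = d.
Proof.
elim: d i fuel => [|d IH] i [|fuel] //= i_d le_d.
  by rewrite addn0 in i_d; rewrite first_branch_cands i_d ?k_le_n ?branch_cands_end.
have lt_ik : i < k by lia.
rewrite first_branch_cands; last by have := k_le_n; lia.
have [] := branch_cands_next lt_ik.
case: (branch_cands i) => [|c cs] //= _ ->; congr S.
by rewrite -rev_rcons -take_nth ?full; [apply: IH; lia | have := k_le_n; lia].
Qed.

Lemma leg_parent_graph : leg E = k.
Proof.
have X_root : nth ord0 X 0 = ord0 := nth_dfs0 _ n.
rewrite /leg; have -> : [:: ord0] = rev (take 1 X).
  by rewrite (take_nth ord0 (n := 0)) ?full // take0 X_root.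
rewrite -{1}X_root; apply: dfs_first_branch_from; have := k_le_n; lia.
Qed.

End FirstBranch.

End ChildSearch.

(* The values 1, ..., first_gap a are all taken by [a], and first_gap a + 1 is not. *)
Definition first_gap n (a : {ffun 'I_n -> 'I_n.+1}) : nat :=
  find (fun l => [forall j, (a j : nat) != l.+1]) (iota 0 n.+1).

Section FirstGap.
Variables (n : nat) (a : {ffun 'I_n -> 'I_n.+1}).
Local Notation K := (first_gap a).
Local Notation gap := (fun l => [forall j, (a j : nat) != l.+1]).

Lemma first_gap_le : K <= n.
Proof.
have : has gap (iota 0 n.+1).
  apply/hasP; exists n; first by rewrite mem_iota add0n ltnSn.
  by apply/forallP => j; rewrite neq_ltn ltn_ord.
by rewrite has_find size_iota.
Qed.

Lemma first_gap_hit v : 0 < v -> v <= K -> exists j, (a j : nat) = v.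
Proof.
move=> v_pos le_vK; have lt_vK : v.-1 < K by rewrite prednK.
have := before_find 0 lt_vK; rewrite nth_iota; last by have := first_gap_le; lia.
by move=> /forallPn [j]; rewrite negbK add0n prednK // => /eqP; exists j.
Qed.

Lemma first_gap_miss j : (a j : nat) != K.+1.
Proof.
have := nth_find 0 (a := gap) (s := iota 0 n.+1).
rewrite has_find size_iota ltnS first_gap_le => /(_ isT).
by rewrite nth_iota ?ltnS ?first_gap_le // add0n => /forallP.
Qed.

End FirstGap.

Definition pf_parent n (a : {ffun 'I_n -> 'I_n.+1}) (j : 'I_n) : nat := (a j).-1.

(* Vertex [j+1] hangs below the [a j]-th vertex of the depth-first order. The
   children of each visited vertex depend on [a] alone, so that order can be
   computed before the tree is known. *)
Definition pf_tree n (a : {ffun 'I_n -> 'I_n.+1}) : graph n :=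
  parent_graph (dfs (child_nbrs (pf_parent a)) n) (pf_parent a).

Section ParkingTree.
Variables (n : nat) (a : {ffun 'I_n -> 'I_n.+1}).
Hypothesis a_pf : a \in parking_functions n.
Local Notation q := (pf_parent a).
Local Notation X := (dfs (child_nbrs q) n).

Lemma parking_pos j : 0 < a j.
Proof. by move: a_pf; rewrite inE => /andP [/forallP]. Qed.

Lemma parking_count i : 0 < i -> i <= n -> i <= #|[set j | (a j : nat) <= i]|.
Proof.
move=> i_pos le_in; move: a_pf; rewrite inE => /andP [_ /forallP].
by move=> /(_ (Ordinal (le_in : i < n.+1))) /implyP; apply.
Qed.

(* A stuck search after k+1 vertices would have visited every [j+1] with
   [a j <= k+1], which are at least k+1 non-root vertices. *)
Lemma dfs_parking_full : size X = n.+1.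
Proof.
apply: dfs_full => k lt_kn size_k; set P := dfs (child_nbrs q) k.
case: (boolP [exists m : 'I_k.+1, has_fresh (child_nbrs q) P m]) => [/existsP [m]|stuck].
  by exists m.
have low_visited : lift ord0 @: [set j | (a j : nat) <= k.+1] \subset [predD1 P & ord0].
  apply/subsetP => v /imsetP [j]; rewrite inE => le_aj ->; rewrite inE /=.
  apply/negPn/negP => j_new.
  have lt_qj : q j < k.+1 by rewrite /pf_parent; have := parking_pos j; lia.
  move/existsPn: stuck => /(_ (Ordinal lt_qj)) /existsP; apply.
  by exists (lift ord0 j); rewrite /child_nbrs mem_children_lift eqxx j_new.
have card_P : #|P| = k.+1 by rewrite -size_k; apply/card_uniqP/dfs_uniq.
have root_P : ord0 \in P by rewrite -(nth_dfs0 (child_nbrs q) k); apply: mem_nth; rewrite size_k.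
have := subset_leq_card low_visited; rewrite card_imset; last exact: lift_inj.
have := cardD1 ord0 (mem P); rewrite root_P card_P add1n => -[<-].
by move/(leq_trans (parking_count (ltn0Sn k) lt_kn)); rewrite ltnn.
Qed.

Lemma pf_tree_tree : pf_tree a \in trees n.
Proof.
exact: (parent_graph_tree (dfs_uniq _ n) dfs_parking_full (nth_dfs0 _ n)
  (dfs_children_parent_before dfs_parking_full)).
Qed.

Lemma leg_pf_tree : leg (pf_tree a) = first_gap a.
Proof.
rewrite /pf_tree; apply: (leg_parent_graph dfs_parking_full) => [l lt_l | j].
  by have [j aj] := first_gap_hit (ltn0Sn l) lt_l; exists j; rewrite /pf_parent aj.
by have := first_gap_miss a j; have := parking_pos j; rewrite /pf_parent; lia.
Qed.

End ParkingTree.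

Lemma pf_tree_inj n : {in parking_functions n &, injective (@pf_tree n)}.
Proof.
move=> a b a_pf b_pf eq_ab.
have full_a := dfs_parking_full a_pf; have full_b := dfs_parking_full b_pf.
have eq_X : dfs (child_nbrs (pf_parent a)) n = dfs (child_nbrs (pf_parent b)) n.
  rewrite (dfs_children_tree full_a) (dfs_children_tree full_b).
  by congr (dfs (tree_nbrs _) n); apply: eq_ab.
have before_a := dfs_children_parent_before full_a.
have before_b := dfs_children_parent_before full_b; rewrite -eq_X in before_b.
move: eq_ab; rewrite /pf_tree -eq_X.
move=> /(parent_graph_inj (dfs_uniq _ n) full_a before_a before_b) eq_q.
apply/ffunP => j; apply/val_inj => /=; have := eq_q j.
by rewrite /pf_parent; have := parking_pos a_pf j; have := parking_pos b_pf j; lia.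
Qed.

Lemma path_exit (T : eqType) (e : rel T) (P : pred T) x p :
  P x -> path e x p -> ~~ P (last x p) -> exists u w, [/\ P u, ~~ P w & e u w].
Proof.
elim: p x => [|y p IH] x Px /=; first by rewrite Px.
case/andP => e_xy y_path last_out; case Py: (P y); first exact: IH Py y_path last_out.
by exists x, y; rewrite Px Py e_xy.
Qed.

Section TreeCode.
Variable n : nat.
Local Notation V := 'I_n.+1.
Variable E : graph n.
Hypothesis E_tree : E \in trees n.
Local Notation Y := (dfs (tree_nbrs E) n).

Lemma tree_connect v : connect (adj E) ord0 v.
Proof. by move: E_tree; rewrite inE /is_tree -andbA => /and3P [_ /forallP]. Qed.

Lemma card_tree : #|E| = n.
Proof. by move: E_tree; rewrite inE /is_tree -andbA => /and3P [_ _ /eqP]. Qed.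

(* Connectivity: an edge leaves the visited set as long as a vertex is unvisited. *)
Lemma dfs_tree_full : size Y = n.+1.
Proof.
apply: dfs_full => k lt_kn size_k; set P := dfs (tree_nbrs E) k.
have card_P : #|P| = k.+1 by rewrite -size_k; apply/card_uniqP/dfs_uniq.
have root_P : ord0 \in P by rewrite -(nth_dfs0 (tree_nbrs E) k); apply: mem_nth; rewrite size_k.
have [w w_new] : exists w, w \notin P.
  case: (pickP (fun w => w \notin P)) => [w|all_in]; first by exists w.
  have : #|V| <= #|P| by apply/subset_leq_card/subsetP => x _; apply/negbFE/all_in.
  by rewrite card_ord card_P; lia.
have /connectP [p p_path w_last] := tree_connect w; rewrite w_last in w_new.
have [u [w' [u_P w'_new e_uw']]] := path_exit root_P p_path w_new.
exists (index u P); first by rewrite -size_k index_mem.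
by apply/existsP; exists w'; rewrite inE nth_index // e_uw'.
Qed.

Let Y_uniq : uniq Y := dfs_uniq _ n.

(* The position in [Y] of the vertex from which [j+1] was discovered. *)
Definition tree_parent (j : 'I_n) : nat :=
  let p := index (lift ord0 j) Y in
  odflt 0 (last_fresh (tree_nbrs E) (dfs (tree_nbrs E) p.-1) p).

Lemma tree_parent_spec j :
  tree_parent j < index (lift ord0 j) Y /\ [set nth ord0 Y (tree_parent j); lift ord0 j] \in E.
Proof.
have [m [last_m lt_m m_nbr]] := dfs_discovered dfs_tree_full (lift0_neq0 j).
have -> : tree_parent j = m by rewrite /tree_parent last_m.
split=> //; move: m_nbr; rewrite inE.
have lt_pn : index (lift ord0 j) Y <= n.+1 by apply/ltnW/index_order_lt/dfs_tree_full.
have size_p : size (dfs (tree_nbrs E) (index (lift ord0 j) Y).-1) = index (lift ord0 j) Y.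
  by rewrite (size_dfs dfs_tree_full) ?prednK //; lia.
have <- // : nth ord0 Y m = nth ord0 (dfs (tree_nbrs E) (index (lift ord0 j) Y).-1) m.
by apply: nth_dfs; rewrite ?size_p //; lia.
Qed.

Lemma tree_parent_before j : tree_parent j < index (lift ord0 j) Y.
Proof. by case: (tree_parent_spec j). Qed.

Lemma parent_graph_tree_parent : parent_graph Y tree_parent = E.
Proof.
apply/eqP; rewrite eqEcard; apply/andP; split.
  by apply/subsetP => e /imsetP [j _ ->]; rewrite setUC; case: (tree_parent_spec j).
have := parent_graph_tree Y_uniq dfs_tree_full (nth_dfs0 _ n) tree_parent_before.
by rewrite inE /is_tree card_tree => /andP [_ /eqP ->].
Qed.

Definition tree_code : {ffun 'I_n -> 'I_n.+1} := [ffun j => inord (tree_parent j).+1].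

Lemma tree_code_val j : (tree_code j : nat) = (tree_parent j).+1.
Proof.
rewrite ffunE inordK //; have := tree_parent_before j.
by have := index_order_lt Y_uniq dfs_tree_full (lift ord0 j); lia.
Qed.

(* The first i+1 vertices of [Y] are the root and i vertices [j+1] with [a j <= i]. *)
Lemma tree_code_pf : tree_code \in parking_functions n.
Proof.
rewrite inE; apply/andP; split; first by apply/forallP => j; rewrite tree_code_val.
apply/forallP => i; apply/implyP => i_pos.
set W := [set j | index (lift ord0 j) Y <= i].
have W_low : W \subset [set j | (tree_code j : nat) <= i].
  by apply/subsetP => j; rewrite !inE tree_code_val => le_i; have := tree_parent_before j; lia.
apply: leq_trans (subset_leq_card W_low); rewrite -(card_imset _ (@lift_inj _ ord0)).
set T := take i.+1 Y.
have card_T : #|T| = i.+1.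
  rewrite (card_uniqP (take_uniq _ Y_uniq)) size_take dfs_tree_full.
  by have := ltn_ord i; case: ifP; lia.
have root_T : ord0 \in T.
  rewrite (mem_take_order Y_uniq dfs_tree_full) -{1}(nth_dfs0 (tree_nbrs E) n).
  by rewrite (index_nth_order Y_uniq dfs_tree_full).
have T_W : [predD1 T & ord0] \subset lift ord0 @: W.
  apply/subsetP => v; rewrite inE /= => /andP [v_neq0 v_T].
  case: (unliftP ord0 v) v_neq0 v_T => [j ->|->] // _ j_T; apply: imset_f.
  by rewrite inE -ltnS -(mem_take_order Y_uniq dfs_tree_full).
have := subset_leq_card T_W.
by have := cardD1 ord0 (mem T); rewrite root_T card_T add1n => -[<-].
Qed.

Lemma pf_tree_code : pf_tree tree_code = E.
Proof.
have same_parent : pf_parent tree_code =1 tree_parent.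
  by move=> j; rewrite /pf_parent tree_code_val.
have eq_Y : Y = dfs (child_nbrs (pf_parent tree_code)) n.
  apply: eq_dfs_full dfs_tree_full _ => s l y lt_ls le_s /=.
  rewrite [in LHS]inE nth_take // /child_nbrs (eq_children _ same_parent).
  have := adj_parent_graph_take Y_uniq dfs_tree_full tree_parent_before y lt_ls le_s.
  by rewrite parent_graph_tree_parent.
rewrite /pf_tree -eq_Y -{2}parent_graph_tree_parent.
by apply: eq_imset => j; rewrite same_parent.
Qed.

End TreeCode.

Local Notation before A t := [set y in A | nat_of_ord y < t].

Section GreedyCenter.
Variable n : nat.
Implicit Types (A S X : {set 'I_n}) (c : {ffun 'I_n -> 'I_n.+1}).

Lemma before0 A : before A 0 = set0.
Proof. by apply/setP => y; rewrite !inE ltn0 andbF. Qed.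

Lemma before_n A : before A n = A.
Proof. by apply/setP => y; rewrite !inE ltn_ord andbT. Qed.

Lemma card_before_le A t : #|before A t| <= #|A|.
Proof. by apply/subset_leq_card/subsetP => y; rewrite inE => /andP []. Qed.

Lemma card_before_succ A (x : 'I_n) : #|before A x.+1| = #|before A x| + (x \in A).
Proof.
case x_A: (x \in A).
  have -> : before A x.+1 = x |: before A x.
    apply/setP => y; rewrite !inE ltnS leq_eqVlt val_eqE.
    by case: (eqVneq y x) => [->|_] /=; rewrite ?x_A ?ltnn ?andbT // andbC.
  by rewrite cardsU1 inE ltnn andbF addnC.
rewrite addn0; apply: eq_card => y; rewrite !inE ltnS leq_eqVlt val_eqE.
by case: (eqVneq y x) => [->|_] /=; rewrite ?x_A ?ltnn.
Qed.

Lemma card_before_attained A t i : t <= n -> i <= #|before A t| ->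
  exists2 t', t' <= t & #|before A t'| = i.
Proof.
elim: t i => [|t IH] i le_tn.
  by rewrite before0 cards0 leqn0 => /eqP ->; exists 0; rewrite ?before0 ?cards0.
have succ_t : #|before A t.+1| = #|before A t| + (Ordinal le_tn \in A).
  exact: (card_before_succ A (Ordinal le_tn)).
rewrite succ_t => le_i; have [le_i'|lt_i] := leqP i #|before A t|.
  by have [t' ? ?] := IH i (ltnW le_tn) le_i'; exists t' => //; apply: leqW.
by exists t.+1; rewrite // succ_t; case: (_ \in A) le_i; rewrite ?addn1 ?addn0; lia.
Qed.

Lemma card_before_lt A (x y : 'I_n) : y \in A -> x < y ->
  #|before A x.+1| < #|before A y.+1|.
Proof.
move=> y_A lt_xy; rewrite (card_before_succ A y) y_A addn1 ltnS.
by apply/subset_leq_card/subsetP => z; rewrite !inE => /andP [-> /leq_trans]; apply.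
Qed.

Lemma card_before_inj A (x y : 'I_n) : x \in A -> y \in A ->
  #|before A x.+1| = #|before A y.+1| -> x = y.
Proof.
move=> x_A y_A eq_card; case: (ltngtP x y) => [lt_xy|lt_yx|/val_inj //].
  by have := card_before_lt y_A lt_xy; rewrite eq_card ltnn.
by have := card_before_lt x_A lt_yx; rewrite eq_card ltnn.
Qed.

Lemma center_rank X (x : 'I_n) : [set y in X | y <= x] = before X x.+1.
Proof. by apply/setP => y; rewrite !inE. Qed.

(* [S] is what a left-to-right scan of [c] keeps when it keeps [j] exactly when
   [c j] is at most one more than the number of entries kept so far. *)
Definition greedy_center c S :=
  forall j : 'I_n, (j \in S) = ((c j : nat) <= #|before S j|.+1).

Lemma greedy_center_uniq c S1 S2 : greedy_center c S1 -> greedy_center c S2 -> S1 = S2.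
Proof.
move=> greedy1 greedy2; rewrite -(before_n S1) -(before_n S2).
suff: forall t, t <= n -> before S1 t = before S2 t by apply.
elim=> [|t IH] le_tn; first by rewrite !before0.
have eq_t := IH (ltnW le_tn); set x := Ordinal le_tn.
have eq_x : (x \in S1) = (x \in S2) by rewrite greedy1 greedy2 /= eq_t.
apply/setP => y; rewrite !inE ltnS leq_eqVlt.
case: (eqVneq (y : nat) t) => [eq_y|_] /=; last by move/setP: eq_t => /(_ y); rewrite !inE.
by rewrite !andbT (_ : y = x) //; apply/val_inj.
Qed.

(* Scanning left to right, the greedy set never falls behind another center. *)
Lemma center_ok_card_le c S X : greedy_center c S -> center_ok c X -> #|X| <= #|S|.
Proof.
move=> greedy okX; rewrite -(before_n X) -(before_n S).
suff: forall t, t <= n -> #|before X t| <= #|before S t| by apply.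
elim=> [|t IH] le_tn; first by rewrite !before0 cards0.
have le_t := IH (ltnW le_tn); set x := Ordinal le_tn.
rewrite (card_before_succ X x) (card_before_succ S x).
have [x_X|x_X] := boolP (x \in X); last by rewrite addn0; apply: leq_trans le_t (leq_addr _ _).
suff -> : x \in S by rewrite leq_add2r.
move: okX => /forall_inP /(_ _ x_X); rewrite center_rank (card_before_succ X x) x_X addn1.
by rewrite greedy => /leq_trans; apply; rewrite ltnS.
Qed.

Lemma zcenter_greedy c S : greedy_center c S -> zcenter c = #|S|.
Proof.
move=> greedy; apply/eqP; rewrite eqn_leq; apply/andP; split.
  by apply/bigmax_leqP => X okX; apply: center_ok_card_le greedy okX.
apply: (@leq_bigmax_cond _ (center_ok c) (fun X => #|X|) S).
apply/forall_inP => x x_S.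
by rewrite center_rank (card_before_succ S x) x_S addn1 -greedy.
Qed.

End GreedyCenter.

Definition last_occ n (a : {ffun 'I_n -> 'I_n.+1}) (j : 'I_n) : 'I_n :=
  [arg max_(i > j | a i == a j) (i : nat)].

Fact last_reps_key : unit. Proof. by []. Qed.

(* Locked, so that [inE] does not unfold membership in it. *)
Definition last_reps n (a : {ffun 'I_n -> 'I_n.+1}) : {set 'I_n} := locked_with last_reps_key
  [set j | ((a j : nat) <= first_gap a) && [forall i, (a i == a j) ==> (i <= j)]].

(* The last occurrence [s] of a value
   [<= first_gap a] gets 1 + the number of earlier such [s'] with [a s' < a s]
   (an inversion table). Any other entry gets 1 + the number of these last
   occurrences up to [last_occ a j], which exceeds its greedy bound. *)
Definition recode_val n (a : {ffun 'I_n -> 'I_n.+1}) (j : 'I_n) : nat :=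
  if j \in last_reps a then
    #|[set s in last_reps a | (s < j) && (a s < a j)]|.+1
  else if (a j : nat) <= first_gap a then #|before (last_reps a) (last_occ a j).+1|.+1
  else a j.

Definition recode n (a : {ffun 'I_n -> 'I_n.+1}) : {ffun 'I_n -> 'I_n.+1} :=
  [ffun j => inord (recode_val a j)].

Section LastReps.
Variables (n : nat) (a : {ffun 'I_n -> 'I_n.+1}).
Hypothesis a_pf : a \in parking_functions n.
Local Notation K := (first_gap a).
Local Notation S := (last_reps a).

Lemma last_occP j :
  [/\ a (last_occ a j) = a j, j <= last_occ a j & forall i, a i = a j -> i <= last_occ a j].
Proof.
rewrite /last_occ; case: arg_maxnP => [//|i /eqP a_i max_i].
by split=> // [|i' a_i']; apply: max_i; rewrite ?a_i'.
Qed.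

Lemma mem_last_reps j :
  (j \in S) = ((a j : nat) <= K) && [forall i, (a i == a j) ==> (i <= j)].
Proof. by rewrite /last_reps locked_withE inE. Qed.

Lemma last_occ_reps j : (a j : nat) <= K -> last_occ a j \in S.
Proof.
have [a_occ _ max_occ] := last_occP j; move=> le_ajK.
by rewrite mem_last_reps a_occ le_ajK; apply/forallP => i; apply/implyP => /eqP /max_occ.
Qed.

Lemma last_reps_le s : s \in S -> (a s : nat) <= K.
Proof. by rewrite mem_last_reps => /andP []. Qed.

Lemma last_reps_max s i : s \in S -> a i = a s -> i <= s.
Proof. by rewrite mem_last_reps => /andP [_ /forallP /(_ i)] /implyP max_s /eqP /max_s. Qed.

Lemma last_reps_inj s s' : s \in S -> s' \in S -> a s = a s' -> s = s'.
Proof.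
move=> s_S s'_S eq_a; apply/val_inj/eqP; rewrite eqn_leq.
by rewrite (last_reps_max s_S (esym eq_a)) (last_reps_max s'_S eq_a).
Qed.

Lemma lt_last_occ j : j \notin S -> (a j : nat) <= K -> j < last_occ a j.
Proof.
move=> j_S le_ajK; have [_ le_j _] := last_occP j.
rewrite ltn_neqAle le_j andbT; apply: contra j_S => /eqP eq_j.
by rewrite (_ : j = last_occ a j) ?last_occ_reps //; apply/val_inj.
Qed.

(* The last occurrences represent the values 1, ..., K once each. *)
Lemma card_reps_below v : v <= K.+1 -> #|[set s in S | (a s : nat) < v]| = v.-1.
Proof.
elim: v => [|v IH] le_vK.
  by apply/eqP; rewrite cards_eq0; apply/eqP/setP => s; rewrite !inE ltn0 andbF.
case: v IH le_vK => [|v] IH le_vK.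
  apply/eqP; rewrite cards_eq0; apply/eqP/setP => s; rewrite !inE ltnS leqn0.
  by have := parking_pos a_pf s; case: (s \in S); lia.
have [j a_j] := first_gap_hit (ltn0Sn v) (le_vK : v.+1 <= K).
have [a_occ _ _] := last_occP j.
have occ_S : last_occ a j \in S by apply: last_occ_reps; rewrite a_j.
have -> : [set s in S | (a s : nat) < v.+2] = last_occ a j |: [set s in S | (a s : nat) < v.+1].
  apply/setP => s; rewrite !inE ltnS leq_eqVlt.
  case: (eqVneq s (last_occ a j)) => [->|neq_s] /=; first by rewrite occ_S a_occ a_j eqxx.
  case s_S: (s \in S) => //=; case: (eqVneq (a s : nat) v.+1) => //= a_s.
  by case/eqP: neq_s; apply: last_reps_inj => //; apply/val_inj => /=; rewrite a_occ a_s a_j.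
by rewrite cardsU1 IH ?inE ?a_occ ?a_j ?ltnn ?andbF //; apply: ltnW.
Qed.

Lemma card_last_reps : #|S| = K.
Proof.
rewrite -[K]/(K.+1.-1) -(card_reps_below (leqnn _)); apply: eq_card => s.
by rewrite !inE; case s_S: (s \in S) => //=; rewrite ltnS last_reps_le.
Qed.

End LastReps.

Section Recode.
Variables (n : nat) (a : {ffun 'I_n -> 'I_n.+1}).
Hypothesis a_pf : a \in parking_functions n.
Local Notation K := (first_gap a).
Local Notation S := (last_reps a).

Lemma recode_val_reps j : j \in S -> recode_val a j <= #|before S j|.+1.
Proof.
move=> j_S; rewrite /recode_val j_S ltnS; apply/subset_leq_card/subsetP => s.
by rewrite !inE => /andP [-> /andP [-> _]].
Qed.

Lemma recode_val_reps_le j : j \in S -> recode_val a j <= K.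
Proof.
move=> j_S; rewrite /recode_val j_S -(card_last_reps a_pf) (cardsD1 j S) j_S add1n ltnS.
apply/subset_leq_card/subsetP => s; rewrite !inE => /andP [-> /andP [lt_sj _]].
by rewrite andbT; apply: contraTneq lt_sj => ->; rewrite ltnn.
Qed.

Lemma recode_val_other j : j \notin S -> (a j : nat) <= K ->
  #|before S j|.+2 <= recode_val a j <= K.+1.
Proof.
move=> j_S le_ajK; rewrite /recode_val (negbTE j_S) le_ajK !ltnS.
apply/andP; split; last by rewrite -(card_last_reps a_pf) card_before_le.
have occ_S := last_occ_reps le_ajK; have lt_j := lt_last_occ j_S le_ajK.
rewrite (card_before_succ S (last_occ a j)) occ_S addn1 ltnS.
by apply/subset_leq_card/subsetP => s; rewrite !inE => /andP [-> /ltn_trans]; apply.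
Qed.

Lemma recode_val_big j : K < a j -> recode_val a j = a j /\ K.+2 <= a j.
Proof.
move=> lt_Kaj; have j_S : j \notin S by apply: contraTN lt_Kaj => /last_reps_le; rewrite -leqNgt.
rewrite /recode_val (negbTE j_S) leqNgt lt_Kaj; split=> //.
by have := first_gap_miss a j; rewrite ltn_neqAle eq_sym lt_Kaj andbT.
Qed.

Lemma first_gap_lt_other j : j \notin S -> K < n.
Proof.
by move=> j_S; have := max_card (mem (j |: S)); rewrite cardsU1 j_S card_last_reps // card_ord.
Qed.

Lemma recode_val_le j : recode_val a j <= n.
Proof.
have le_Kn := first_gap_le a.
have [j_S|j_S] := boolP (j \in S); first by apply: leq_trans (recode_val_reps_le j_S) _.
have [le_ajK|lt_Kaj] := leqP (a j) K.
  by case/andP: (recode_val_other j_S le_ajK) => _ /leq_trans; apply; apply: first_gap_lt_other j_S.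
by have [-> _] := recode_val_big lt_Kaj; rewrite -ltnS ltn_ord.
Qed.

Lemma recodeE j : (recode a j : nat) = recode_val a j.
Proof. by rewrite ffunE inordK // ltnS recode_val_le. Qed.

Lemma recode_greedy : greedy_center (recode a) S.
Proof.
move=> j; rewrite recodeE; have [j_S|j_S] := boolP (j \in S); first by rewrite recode_val_reps.
apply/esym/negbTE; rewrite -ltnNge.
have [le_ajK|lt_Kaj] := leqP (a j) K; first by case/andP: (recode_val_other j_S le_ajK).
have [-> le_aj] := recode_val_big lt_Kaj.
by apply: leq_trans le_aj; rewrite !ltnS -(card_last_reps a_pf) card_before_le.
Qed.

Lemma zcenter_recode : zcenter (recode a) = K.
Proof. by rewrite (zcenter_greedy recode_greedy) card_last_reps. Qed.

Lemma recode_pos j : 0 < recode a j.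
Proof.
rewrite recodeE; have [j_S|j_S] := boolP (j \in S); first by rewrite /recode_val j_S.
have [le_ajK|lt_Kaj] := leqP (a j) K.
  by case/andP: (recode_val_other j_S le_ajK) => /(leq_trans _) ->.
by have [-> _] := recode_val_big lt_Kaj; apply: parking_pos.
Qed.

(* For i <= K the first last-occurrences already give i entries [<= i]; for
   i > K every entry [<= i] of [a] stays [<= i]. *)
Lemma recode_count i : 0 < i -> i <= n -> i <= #|[set j | (recode a j : nat) <= i]|.
Proof.
move=> i_pos le_in; have [le_iK|lt_Ki] := leqP i K.
  have [t le_tn card_t] : exists2 t, t <= n & #|before S t| = i.
    by apply: card_before_attained; rewrite ?before_n ?card_last_reps.
  rewrite -{1}card_t; apply/subset_leq_card/subsetP => s; rewrite !inE => /andP [s_S lt_st].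
  rewrite recodeE; apply: leq_trans (recode_val_reps s_S) _; rewrite -card_t.
  have := card_before_succ S s; rewrite s_S addn1 => <-; apply/subset_leq_card/subsetP => y.
  by rewrite !inE => /andP [-> /leq_trans]; apply.
apply: leq_trans (parking_count a_pf i_pos le_in) _.
apply/subset_leq_card/subsetP => j; rewrite !inE recodeE => le_aji.
have [j_S|j_S] := boolP (j \in S).
  by apply: leq_trans (recode_val_reps_le j_S) (ltnW lt_Ki).
have [le_ajK|lt_Kaj] := leqP (a j) K.
  by case/andP: (recode_val_other j_S le_ajK) => _ /leq_trans; apply.
by have [-> _] := recode_val_big lt_Kaj.
Qed.

Lemma recode_pf : recode a \in parking_functions n.
Proof.
rewrite inE; apply/andP; split; first by apply/forallP => j; apply: recode_pos.
by apply/forallP => i; apply/implyP => i_pos; apply: (recode_count i_pos); rewrite -ltnS.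
Qed.

End Recode.

Section RepsCount.
Variables (n : nat) (a : {ffun 'I_n -> 'I_n.+1}).
Hypothesis a_pf : a \in parking_functions n.
Local Notation K := (first_gap a).
Local Notation S := (last_reps a).
Local Notation later s v := [set s' in S | (s < s') && (a s' < v)].

Lemma recode_val_gt j : (K.+1 < recode_val a j) = (K < a j).
Proof.
have [j_S|j_S] := boolP (j \in S).
  by have := recode_val_reps_le a_pf j_S; have := last_reps_le j_S; lia.
have [le_ajK|lt_Kaj] := leqP (a j) K.
  by case/andP: (recode_val_other a_pf j_S le_ajK) => _; lia.
by have [-> ?] := recode_val_big lt_Kaj; lia.
Qed.

Lemma card_reps_split s : s \in S ->
  #|[set s' in S | (s' < s) && (a s' < a s)]| + #|later s (a s)| = (a s).-1.
Proof.
move=> s_S; rewrite -(card_reps_below a_pf (leqW (last_reps_le s_S))).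
rewrite -(cardsID [set s' : 'I_n | s' < s] [set s' in S | a s' < a s]).
congr (_ + _); apply: eq_card => x; rewrite !inE.
  by case: (x \in S); case: (x < s); case: (a x < a s).
case: (x \in S) => //=; case: (ltngtP x s) => [||eq_xs] /=; rewrite ?andbF //.
by rewrite (_ : x = s) ?ltnn ?andbF //; apply/val_inj.
Qed.

(* Between [a s] and [v] the later last occurrences miss the value [a s] itself. *)
Lemma card_later_gap s v : s \in S -> a s < v -> v <= K.+1 ->
  #|later s v| < #|later s (a s)| + (v - a s).
Proof.
move=> s_S lt_sv le_vK.
set W := [set s' in S | (s < s') && (a s <= a s') && (a s' < v)].
have split_v : #|later s v| = #|later s (a s)| + #|W|.
  rewrite -(cardsID [set s' | a s' < a s] (later s v)); congr (_ + _); apply: eq_card => x.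
    rewrite !inE; case: (ltnP (a x) (a s)) => lt_x.
    by rewrite (ltn_trans lt_x lt_sv) !andbT.
    by rewrite !andbF.
  by rewrite !inE; case: (x \in S) => //=; case: (s < x) => //=; rewrite -leqNgt andbC.
have W_sub : W \subset [set s' in S | a s' < v] :\: [set s' in S | a s' < (a s).+1].
  apply/subsetP => x; rewrite !inE => /and3P [x_S /andP [lt_sx le_x] lt_xv].
  rewrite x_S lt_xv andbT /= -leqNgt ltn_neqAle le_x !andbT; apply: contraTneq lt_sx => eq_a.
  by rewrite (last_reps_inj s_S x_S (val_inj eq_a)) ltnn.
have := subset_leq_card W_sub; rewrite cardsD.
have -> : [set s' in S | a s' < v] :&: [set s' in S | a s' < (a s).+1] =
          [set s' in S | a s' < (a s).+1].
  by apply/setIidPr/subsetP => x; rewrite !inE => /andP [-> /leq_trans]; apply.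
rewrite !card_reps_below //; last exact: leq_trans lt_sv le_vK.
by rewrite split_v; lia.
Qed.

End RepsCount.

(* Last occurrences are recovered from right to left from their inversion counts. *)
Lemma recode_reps_le n (a b : {ffun 'I_n -> 'I_n.+1}) s :
  a \in parking_functions n -> b \in parking_functions n -> last_reps a = last_reps b ->
  s \in last_reps a -> {in last_reps a, forall s' : 'I_n, s < s' -> a s' = b s'} ->
  recode_val a s = recode_val b s -> (a s : nat) <= b s.
Proof.
move=> a_pf b_pf eq_S s_S later_eq eq_val; rewrite leqNgt; apply/negP => lt_ba.
have s_Sb : s \in last_reps b by rewrite -eq_S.
have eq_K : first_gap b = first_gap a by rewrite -(card_last_reps a_pf) -(card_last_reps b_pf) eq_S.
have eq_later v : [set s' in last_reps b | (s < s') && (b s' < v)] =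
                  [set s' in last_reps a | (s < s') && (a s' < v)].
  apply/setP => x; rewrite -eq_S !inE; case x_S: (x \in last_reps a) => //=.
  by case lt_sx: (s < x) => //=; rewrite later_eq.
have le_aK : a s <= (first_gap b).+1 by rewrite eq_K leqW ?last_reps_le.
have := card_later_gap b_pf s_Sb lt_ba le_aK; rewrite !eq_later.
have := card_reps_split a_pf s_S; have := card_reps_split b_pf s_Sb; rewrite eq_later.
move: eq_val; rewrite /recode_val s_S s_Sb -eq_S => -[->].
set L := #|[set s' in last_reps a | (s' < s) && (b s' < b s)]|.
set Ra := #|[set s' in last_reps a | (s < s') && (a s' < a s)]|.
set Rb := #|[set s' in last_reps a | (s < s') && (a s' < b s)]|.
by have := parking_pos b_pf s; lia.
Qed.

Section RecodeInj.
Variables (n : nat) (a b : {ffun 'I_n -> 'I_n.+1}).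
Hypothesis a_pf : a \in parking_functions n.
Hypothesis b_pf : b \in parking_functions n.
Hypothesis eq_recode : recode a = recode b.
Local Notation K := (first_gap a).
Local Notation S := (last_reps a).

Lemma recode_eq_reps : S = last_reps b.
Proof.
apply: greedy_center_uniq (recode_greedy b_pf).
by rewrite -eq_recode; apply: recode_greedy.
Qed.

Lemma recode_eq_gap : K = first_gap b.
Proof. by rewrite -(card_last_reps a_pf) -(card_last_reps b_pf) recode_eq_reps. Qed.

Lemma recode_eq_val j : recode_val a j = recode_val b j.
Proof. by rewrite -(recodeE a_pf) -(recodeE b_pf) eq_recode. Qed.

Lemma recode_eq_on_reps : {in S, a =1 b}.
Proof.
have eq_S := recode_eq_reps.
suff: forall m s, s \in S -> n - s <= m -> a s = b s.
  by move=> H s s_S; apply: (H n) => //; apply: leq_subr.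
elim=> [|m IH] s s_S le_m; first by have := ltn_ord s; lia.
have later_eq : {in S, forall s' : 'I_n, s < s' -> a s' = b s'}.
  by move=> s' s'_S lt_ss'; apply: IH => //; lia.
have later_eq' : {in last_reps b, forall s' : 'I_n, s < s' -> b s' = a s'}.
  by move=> s'; rewrite -eq_S => s'_S /(later_eq _ s'_S).
apply/val_inj/eqP; rewrite eqn_leq recode_reps_le ?recode_eq_val //=.
by apply: (recode_reps_le b_pf a_pf (esym eq_S)) later_eq' _; rewrite -?eq_S ?recode_eq_val.
Qed.

Lemma recode_eq_low j : j \notin S -> (a j : nat) <= K -> a j = b j.
Proof.
move=> j_S le_ajK.
have j_Sb : j \notin last_reps b by rewrite -recode_eq_reps.
have le_bjK : (b j : nat) <= first_gap b.
  by rewrite leqNgt -(recode_val_gt b_pf) -recode_eq_val -recode_eq_gap recode_val_gt // -leqNgt.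
have occ_S := last_occ_reps le_ajK; have occ_Sb := last_occ_reps le_bjK.
rewrite -recode_eq_reps in occ_Sb.
have := recode_eq_val j; rewrite /recode_val (negbTE j_S) (negbTE j_Sb) le_ajK le_bjK.
rewrite -recode_eq_reps => -[/(card_before_inj occ_S occ_Sb) eq_occ].
have [a_occ _ _] := last_occP a j; have [b_occ _ _] := last_occP b j.
by rewrite -[LHS]a_occ -[RHS]b_occ -eq_occ recode_eq_on_reps.
Qed.

Lemma recode_eq : a = b.
Proof.
apply/ffunP => j; have [j_S|j_S] := boolP (j \in S); first exact: recode_eq_on_reps.
have [le_ajK|lt_Kaj] := leqP (a j) K; first exact: recode_eq_low.
have lt_Kbj : first_gap b < b j.
  by rewrite -(recode_val_gt b_pf) -recode_eq_val -recode_eq_gap recode_val_gt.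
have [eq_a _] := recode_val_big lt_Kaj; have [eq_b _] := recode_val_big lt_Kbj.
by apply/val_inj; rewrite /= -eq_a -eq_b recode_eq_val.
Qed.

End RecodeInj.

Lemma recode_inj n : {in parking_functions n &, injective (@recode n)}.
Proof. by move=> a b a_pf b_pf; apply: recode_eq. Qed.

Import GRing.Theory.
Local Open Scope ring_scope.

Theorem theorem2p1 (n : nat) (hn : (0 < n)%N) :
  \sum_(E in trees n) ('X^(leg E) : {poly int})
  = \sum_(a in parking_functions n) ('X^(zcenter a) : {poly int}).
Proof.
have trees_pf : trees n = @pf_tree n @: parking_functions n.
  apply/setP => E; apply/idP/imsetP => [E_tree|[a a_pf ->]]; last exact: pf_tree_tree.
  by exists (tree_code E); [apply: tree_code_pf | rewrite pf_tree_code].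
have pf_recode : parking_functions n = @recode n @: parking_functions n.
  apply/eqP; rewrite eq_sym eqEcard card_in_imset ?leqnn ?andbT; last exact: recode_inj.
  by apply/subsetP => c /imsetP [a a_pf ->]; apply: recode_pf.
rewrite trees_pf big_imset /=; last exact: pf_tree_inj.
rewrite [in RHS]pf_recode big_imset /=; last exact: recode_inj.
by apply: eq_bigr => a a_pf; rewrite leg_pf_tree ?zcenter_recode.
Qed.
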